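(* Let $G$ be a graph, $X_C \subseteq V(G)$, $z \geq 0$, and let $H$ be an $X_C$-certificate of order $z$ in $G$. Then $H$ contains a subgraph $\hat{H}$ that is an $X_C$-certificate of order $z$ in $G$ such that $\hat{H} - X_C$ has at most $z^2 |X_C|$ connected components.
   Context: $\mathrm{oct}(H)$ denotes the minimum size of a set $S\subseteq V(H)$ with $H - S$ bipartite. For $X_C \subseteq V(G)$, an $X_C$-certificate of order $z$ is a subgraph $H$ of $G$ such that $H - X_C$ is bipartite, $\mathrm{oct}(H)=|X_C|$, and each connected component $H'$ of $H$ has $|X_C\cap V(H')|\le z$. *)

(* A graph G on a finite vertex type T is a symmetric,
   irreflexive relation e : rel T (vertex set = all of T).
   A subgraph is a pair (V, E) of a vertex set V : {set T} and a symmetric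
   edge relation E : rel T whose edges join vertices of V. *)
From mathcomp Require Import all_boot all_order.
Set Implicit Arguments. Unset Strict Implicit. Unset Printing Implicit Defensive.

Section Graphs.
Variable T : finType.

Definition simple_graph (e : rel T) : Prop := symmetric e /\ irreflexive e.

Definition subgraph_of (V0 : {set T}) (E0 : rel T) (V : {set T}) (E : rel T) : Prop :=
  V \subset V0 /\ symmetric E /\
  (forall x y, E x y -> [&& E0 x y, x \in V & y \in V]).

Definition restr (V : {set T}) (E : rel T) : rel T :=
  [rel x y | [&& E x y, x \in V & y \in V]].

Definition del_V (V : {set T}) (S : {set T}) : {set T} := V :\: S.
Definition del_E (V : {set T}) (E : rel T) (S : {set T}) : rel T := restr (V :\: S) E.

Definition bipartite (V : {set T}) (E : rel T) : bool :=
  [exists f : {ffun T -> bool},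
     [forall x in V, forall y in V, E x y ==> (f x != f y)]].

Definition oct (V : {set T}) (E : rel T) : nat :=
  \big[minn/#|T|]_(S : {set T} | (S \subset V) && bipartite (del_V V S) (del_E V E S)) #|S|.

Definition components (V : {set T}) (E : rel T) : {set {set T}} :=
  [set [set y in V | connect (restr V E) x y] | x in V].

Definition certificate (e : rel T) (XC : {set T}) (z : nat)
    (V : {set T}) (E : rel T) : Prop :=
  [/\ subgraph_of [set: T] e V E,
      bipartite (del_V V XC) (del_E V E XC),
      oct V E = #|XC| &
      forall C, C \in components V E -> #|XC :&: C| <= z].

End Graphs.

(* Fix a proper 2-colouring f of H - X.  A component D of H - X containing
   neighbours of terminals a, b in X carries a-b paths of a definite parity; there
   are at most z |X| such (pair, parity) classes, since a terminal shares its
   component of H with at most z terminals.  Keep z components realizing each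
   class and let H^ be X together with the kept components: H^ - X then has at most
   z^2 |X| components, and the only nontrivial certificate condition is
   oct(H^) >= |X|.  If S were a smaller odd cycle transversal of H^, with colouring
   g of H^ - S, some component C of H would have |S :&: C| < |X :&: C| <= z.  A
   class realized inside C by a component that was not kept has z kept
   representatives in C; a representative missing S forces g to respect the
   parity of the class, so if g violated it, S :&: C would have z elements.  Hence
   on every unkept component of H - X inside C, f or its flip agrees with g at the
   adjacent terminals outside S, and H - ((X :\: C) :|: (S :&: C)) is bipartite,
   contradicting oct(H) = |X|. *)

From mathcomp Require Import all_boot all_order.
Set Implicit Arguments. Unset Strict Implicit. Unset Printing Implicit Defensive.

Section Components.
Variable T : finType.
Implicit Types (W : {set T}) (R : rel T).

Definition component W R x := [set y in W | connect (restr W R) x y].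

Lemma restr_sym W R : symmetric R -> symmetric (restr W R).
Proof. by move=> sR x y; rewrite /restr /= sR; case: (R y x); rewrite //= andbC. Qed.

Lemma restr_restr W W' R : W \subset W' -> restr W (restr W' R) =2 restr W R.
Proof.
move=> sWW' x y; rewrite /restr /=.
case xW: (x \in W); case yW: (y \in W); rewrite ?andbF //=.
by rewrite (subsetP sWW' x) ?(subsetP sWW' y) ?andbT.
Qed.

Lemma connect_restr_sub W W' R :
  W \subset W' -> subrel (connect (restr W R)) (connect (restr W' R)).
Proof.
move=> sWW'; apply: connect_sub => x y /and3P[Rxy xW yW].
by rewrite connect1 // /restr /= Rxy !(subsetP sWW').
Qed.

Lemma components_restr W W' R :
  W \subset W' -> components W (restr W' R) = components W R.
Proof.
move=> sWW'; apply: eq_imset => x; apply/setP => y; rewrite !inE.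
by rewrite (eq_connect (restr_restr R sWW')).
Qed.

Lemma mem_component W R x : x \in W -> x \in component W R x.
Proof. by move=> xW; rewrite inE xW connect0. Qed.

Lemma component_in_components W R x : x \in W -> component W R x \in components W R.
Proof. exact: imset_f. Qed.

Lemma components_sub W R C : C \in components W R -> C \subset W.
Proof. by case/imsetP => x _ ->; apply/subsetP => y; rewrite inE => /andP[]. Qed.

Lemma components_closed W R C x y :
  C \in components W R -> x \in C -> y \in W -> R x y -> y \in C.
Proof.
case/imsetP => c _ -> /[!inE] /andP[xW cx] yW Rxy; rewrite yW.
by apply: connect_trans cx (connect1 _); rewrite /restr /= Rxy xW yW.
Qed.

Lemma card_setI_cover (P : {set {set T}}) (Y : {set T}) :
  trivIset P -> #|Y :&: cover P| = \sum_(D in P) #|Y :&: D|.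
Proof.
move=> tiP; transitivity (\sum_(x in cover P | x \in Y) 1).
  by rewrite sum1dep_card; apply: eq_card => x; rewrite !inE andbC.
rewrite big_trivIset_cond //; apply: eq_bigr => D _.
by rewrite sum1dep_card; apply: eq_card => x; rewrite !inE andbC.
Qed.

Lemma leq_card_hitting (P : {set {set T}}) (Y : {set T}) :
  trivIset P -> {in P, forall D : {set T}, ~~ [disjoint D & Y]} -> #|P| <= #|Y|.
Proof.
move=> tiP hitP; apply: leq_trans (subset_leq_card (subsetIl Y (cover P))).
rewrite card_setI_cover // -sum1_card; apply: leq_sum => D DP.
by rewrite card_gt0 setIC setI_eq0 hitP.
Qed.

Lemma card_bigcup_leq (I : finType) (J : {set I}) (F : I -> {set T}) :
  #|\bigcup_(i in J) F i| <= \sum_(i in J) #|F i|.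
Proof.
apply: (big_ind2 (fun (A : {set T}) n => #|A| <= n)) => //; first by rewrite cards0.
by move=> A m B n hA hB; apply: leq_trans (leq_card_setU A B).1 (leq_add hA hB).
Qed.

Section Symmetric.
Variable R : rel T.
Hypothesis sR : symmetric R.

Lemma componentE W C y : C \in components W R -> y \in C -> C = component W R y.
Proof.
case/imsetP => x _ -> /[!inE] /andP[_ xy]; apply/setP => t; rewrite !inE.
apply: andb_id2l => _; apply/idP/idP; last exact: connect_trans.
rewrite (sym_connect_sym (restr_sym W sR)) in xy; exact: connect_trans.
Qed.

Lemma connect_in_component W C x y :
  C \in components W R -> x \in C -> y \in C -> connect (restr C R) x y.
Proof.
move=> Cc xC; rewrite {1}(componentE Cc xC) inE => /andP[_ /connectP[p]].
elim: p x xC => [|t p IH] x xC /=; first by move=> _ ->.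
case/andP=> /and3P[Rxt _ tW] pt lst; have tC := components_closed Cc xC tW Rxt.
by apply: connect_trans (connect1 _) (IH t tC pt lst); rewrite /restr /= Rxt xC tC.
Qed.

Lemma component_invariant W C (aT : eqType) (h : T -> aT) : C \in components W R ->
  (forall x y, x \in C -> y \in C -> R x y -> h x = h y) -> {in C &, forall u v, h u = h v}.
Proof.
move=> Cc hC u v uC vC; apply/eqP; rewrite eq_sym.
have closed_h : closed (restr C R) [pred t | h t == h u].
  by move=> x y /and3P[Rxy xC yC]; rewrite !inE (hC x y).
by have := closed_connect closed_h (connect_in_component Cc uC vC); rewrite !inE eqxx.
Qed.

Lemma partition_components W : partition (components W R) W.
Proof.
apply: equivalence_partitionP => x y t _ _ _; split; first exact: connect0.
move=> xy; apply/idP/idP; last exact: connect_trans.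
rewrite (sym_connect_sym (restr_sym W sR)) in xy; exact: connect_trans.
Qed.

Lemma card_setI_components W (Y : {set T}) :
  #|Y :&: W| = \sum_(C in components W R) #|Y :&: C|.
Proof.
have /and3P[/eqP coverW tiW _] := partition_components W.
by rewrite -{1}coverW card_setI_cover.
Qed.

Lemma sub_component W W' C C' v : W' \subset W ->
  C' \in components W' R -> C \in components W R -> v \in C' -> v \in C -> C' \subset C.
Proof.
move=> sWW' C'c Cc vC' vC; rewrite (componentE C'c vC') (componentE Cc vC).
apply/subsetP => y /[!inE] /andP[yW' vy].
by rewrite (subsetP sWW') //= (connect_restr_sub sWW').
Qed.

Lemma components_cover W (M : {set {set T}}) :
  M \subset components W R -> components (cover M) R = M.
Proof.
move=> MW; have sMW : cover M \subset W.
  by apply/bigcupsP => D /(subsetP MW)/components_sub.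
have compM D x : D \in M -> x \in D -> component (cover M) R x = D.
  move=> DM xD; have Dc := subsetP MW D DM.
  have sDM : D \subset cover M by apply: bigcup_sup.
  have xM : x \in cover M := subsetP sDM x xD.
  apply/eqP; rewrite eqEsubset; apply/andP; split.
    exact: sub_component sMW (component_in_components R xM) Dc (mem_component R xM) xD.
  apply/subsetP => y yD; rewrite inE (subsetP sDM) //=.
  exact: connect_restr_sub sDM _ _ (connect_in_component Dc xD yD).
apply/setP => D; apply/imsetP/idP => [[x /bigcupP[D' D'M xD'] ->]|DM].
  by change (component (cover M) R x \in M); rewrite (compM D').
have /imsetP[x xW defD] := subsetP MW D DM.
have xD : x \in D by rewrite defD mem_component.
by exists x; [apply/bigcupP; exists D | exact/esym/(compM D)].
Qed.

End Symmetric.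

End Components.

Section OddCycleTransversal.
Variable T : finType.
Implicit Types (V S : {set T}) (E : rel T).

Lemma bipartite_delP V E S : reflect (exists f : {ffun T -> bool},
    forall x y, x \in V :\: S -> y \in V :\: S -> E x y -> f x != f y)
  (bipartite (del_V V S) (del_E V E S)).
Proof.
apply: (iffP existsP) => -[f hf]; exists f.
  move=> x y xVS yVS Exy.
  move: hf => /forall_inP/(_ x xVS)/forall_inP/(_ y yVS)/implyP; apply.
  by rewrite /del_E /restr /= Exy xVS yVS.
apply/forall_inP => x xVS; apply/forall_inP => y yVS; apply/implyP.
by rewrite /del_E /restr /= => /andP[Exy _]; apply: hf.
Qed.

Lemma oct_le_card V E S : bipartite (del_V V S) (del_E V E S) -> oct V E <= #|S :&: V|.
Proof.
move=> bS; have eqVS : V :\: (S :&: V) = V :\: S.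
  by apply/setP => x; rewrite !inE; case: (x \in V); rewrite ?andbT ?andbF.
have : S :&: V \in [seq S' : {set T} <- index_enum {set T} |
                    (S' \subset V) && bipartite (del_V V S') (del_E V E S')].
  by rewrite mem_filter subsetIr /del_V /del_E eqVS bS mem_index_enum.
rewrite /oct -big_filter; elim: (filter _ _) => //= S' s IH.
rewrite big_cons inE => /orP[/eqP<-|/IH]; first exact: geq_minl.
exact: leq_trans (geq_minr _ _).
Qed.

Lemma leq_oct V E n : n <= #|T| ->
  (forall S, S \subset V -> bipartite (del_V V S) (del_E V E S) -> n <= #|S|) ->
  n <= oct V E.
Proof.
move=> nT hn; rewrite /oct; elim/big_ind: _ => //.
  by move=> a b ha hb; rewrite leq_min ha hb.
by move=> S /andP[]; apply: hn.
Qed.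

Lemma oct_card_sub V E S :
  bipartite (del_V V S) (del_E V E S) -> oct V E = #|S| -> S \subset V.
Proof.
move=> bS octS; have := oct_le_card bS; rewrite octS => SV.
have /eqP <- : S :&: V == S by rewrite eqEcard subsetIl SV.
exact: subsetIr.
Qed.

End OddCycleTransversal.

Lemma card_take_enum (aT : finType) (A : {set aT}) n :
  #|[set x in take n (enum A)]| = minn n #|A|.
Proof. by rewrite cardsE (card_uniqP _) ?take_uniq ?enum_uniq // size_take_min cardE. Qed.

Section Reduction.
Variables (T : finType) (e : rel T) (X : {set T}) (z : nat) (V : {set T}) (E : rel T).
Hypothesis sE : symmetric E.
Hypothesis EV : forall x y, E x y -> [&& e x y, x \in V & y \in V].
Hypothesis XV : X \subset V.
Hypothesis zb : forall C, C \in components V E -> #|X :&: C| <= z.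
Variable f : {ffun T -> bool}.
Hypothesis fP : forall x y, x \in V :\: X -> y \in V :\: X -> E x y -> f x != f y.

Local Notation compsHX := (components (V :\: X) E).

Lemma compsHX_sub D : D \in compsHX -> D \subset V :\: X.
Proof. exact: components_sub. Qed.

(* Each unordered pair {a, b} of terminals, with each parity of an a-b path,
   is represented by exactly one ordered pair; for a = b only the odd parity
   (an odd cycle through a) is represented. *)
Definition odd_pair (a b : T) := (enum_rank b <= enum_rank a)%N.

Lemma odd_pair_refl a : odd_pair a a.
Proof. exact: leqnn. Qed.

Lemma odd_pairC a b : a != b -> odd_pair b a = ~~ odd_pair a b.
Proof.
move=> nab; rewrite /odd_pair -ltnNge ltn_neqAle andb_idl // => _.
by apply: contra nab => /eqP/val_inj/enum_rank_inj ->.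
Qed.

(* The neighbours ua of a and ub of b in D are joined inside D by a path whose
   parity is f ua != f ub, which is the parity of the resulting a-b paths. *)
Definition realizes (D : {set T}) a b := [&& a \in X, b \in X &
  [exists ua in D, exists ub in D, [&& E a ua, E b ub & (f ua != f ub) == odd_pair a b]]].

Definition realizers a b := [set D in compsHX | realizes D a b].

Definition kept a b := [set D in take z (enum (realizers a b))].

Definition kept_comps := \bigcup_(a in X) \bigcup_(b in X :&: component V E a) kept a b.

Definition Vh := X :|: cover kept_comps.

Definition Eh := restr Vh E.

Lemma realizer_sub_component D a b :
  D \in compsHX -> realizes D a b -> D \subset component V E a.
Proof.
move=> Dc /and3P[_ _ /exists_inP[ua uaD /exists_inP[_ _ /andP[Eaua _]]]].
have /and3P[_ aV uaV] := EV Eaua.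
have uaa : ua \in component V E a.
  by rewrite inE uaV connect1 // /restr /= Eaua aV uaV.
exact: (sub_component sE (subsetDl V X) Dc (component_in_components E aV) uaD uaa).
Qed.

Lemma realizes_component D a b :
  D \in compsHX -> realizes D a b -> b \in component V E a.
Proof.
move=> Dc rD; have DC := realizer_sub_component Dc rD.
case/and3P: rD => aX _ /exists_inP[_ _ /exists_inP[ub ubD /and3P[_ Ebub _]]].
have /and3P[_ bV _] := EV Ebub; have Ca := component_in_components E (subsetP XV a aX).
by apply: components_closed Ca (subsetP DC ub ubD) bV _; rewrite sE.
Qed.

Lemma kept_sub a b : kept a b \subset realizers a b.
Proof. by apply/subsetP => D; rewrite inE => /mem_take; rewrite mem_enum. Qed.

Lemma card_kept a b : #|kept a b| <= z.
Proof. by rewrite card_take_enum geq_minl. Qed.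

Lemma card_kept_full a b D : D \in realizers a b -> D \notin kept a b -> #|kept a b| = z.
Proof.
move=> Dr; rewrite card_take_enum inE; case: leqP => // /ltnW rz.
by rewrite take_oversize -?cardE // mem_enum Dr.
Qed.

Lemma kept_sub_comps a b : kept a b \subset kept_comps.
Proof.
apply/subsetP => D Dk; have := subsetP (kept_sub a b) D Dk; rewrite inE => /andP[Dc rD].
have ab := realizes_component Dc rD; case/and3P: rD => aX bX _.
by apply/bigcupP; exists a => //; apply/bigcupP; exists b; rewrite // inE bX.
Qed.

Lemma kept_comps_sub : kept_comps \subset compsHX.
Proof.
apply/bigcupsP => a _; apply/bigcupsP => b _; apply: subset_trans (kept_sub a b) _.
by apply/subsetP => D; rewrite inE => /andP[].
Qed.

Lemma card_kept_comps : #|kept_comps| <= z ^ 2 * #|X|.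
Proof.
apply: leq_trans (card_bigcup_leq _ _) _.
rewrite expnS expn1 mulnC -sum_nat_const; apply: leq_sum => a aX.
apply: leq_trans (card_bigcup_leq _ _) _.
apply: (@leq_trans (\sum_(b in X :&: component V E a) z)).
  by apply: leq_sum => b _; apply: card_kept.
rewrite sum_nat_const leq_mul2r zb ?orbT //.
exact: component_in_components (subsetP XV a aX).
Qed.

Lemma X_sub_Vh : X \subset Vh.
Proof. exact: subsetUl. Qed.

Lemma kept_sub_Vh D : D \in kept_comps -> D \subset Vh.
Proof. by move=> DM; apply: subset_trans (bigcup_sup D DM) (subsetUr _ _). Qed.

Lemma notin_Vh_VX v : v \in V -> v \notin Vh -> v \in V :\: X.
Proof.
by move=> vV vnVh; rewrite inE vV andbT; apply: contra vnVh; apply: (subsetP X_sub_Vh).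
Qed.

Lemma cover_kept_sub : cover kept_comps \subset V :\: X.
Proof. by apply/bigcupsP => D /(subsetP kept_comps_sub); apply: compsHX_sub. Qed.

Lemma Vh_sub : Vh \subset V.
Proof. by rewrite subUset XV (subset_trans cover_kept_sub) ?subsetDl. Qed.

Lemma VhDX : Vh :\: X = cover kept_comps.
Proof.
rewrite /Vh setDUl setDv set0U; apply/setDidPl/(disjointWl cover_kept_sub).
by rewrite disjoints_subset setDE subsetIr.
Qed.

Lemma components_hat_del : components (del_V Vh X) (del_E Vh Eh X) = kept_comps.
Proof.
rewrite /del_V /del_E /Eh !components_restr ?subsetDl // VhDX.
exact: components_cover kept_comps_sub.
Qed.

Lemma subgraph_hat : subgraph_of V E Vh Eh.
Proof. by split; [apply: Vh_sub | split; [apply: restr_sym | ]]. Qed.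

Lemma bipartite_hat_del : bipartite (del_V Vh X) (del_E Vh Eh X).
Proof.
apply/bipartite_delP; exists f => x y xVh yVh /and3P[Exy _ _].
by apply: fP => //; apply: subsetP (setSD X Vh_sub) _ _.
Qed.

Lemma components_hat_bound C : C \in components Vh Eh -> #|X :&: C| <= z.
Proof.
rewrite /Eh components_restr // => Cc.
have /imsetP[v vVh defC] := Cc; have vC : v \in C by rewrite defC mem_component.
have vV := subsetP Vh_sub v vVh.
have CH := sub_component sE Vh_sub Cc (component_in_components E vV) vC (mem_component E vV).
exact: leq_trans (subset_leq_card (setIS X CH)) (zb (component_in_components E vV)).
Qed.

Lemma oct_hat_le : oct Vh Eh <= #|X|.
Proof. by rewrite -(setIidPl X_sub_Vh); apply: oct_le_card bipartite_hat_del. Qed.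

Section SmallTransversal.
Variables (S : {set T}) (g : {ffun T -> bool}) (C : {set T}).
Hypothesis SVh : S \subset Vh.
Hypothesis gP : forall x y, x \in Vh :\: S -> y \in Vh :\: S -> E x y -> g x != g y.
Hypothesis Cc : C \in components V E.
Hypothesis SC_lt : #|S :&: C| < #|X :&: C|.

Lemma realizes_parity_disjoint D a b : D \in compsHX -> D \subset Vh -> [disjoint D & S] ->
  realizes D a b -> a \notin S -> b \notin S -> (g a != g b) = odd_pair a b.
Proof.
move=> Dc DVh DS /and3P[aX bX /exists_inP[ua uaD /exists_inP[ub ubD /and3P[Eaua Ebub fab]]]] aS bS.
have inVhS x : x \in Vh -> x \notin S -> x \in Vh :\: S by move=> *; apply/setDP.
have DVhS x : x \in D -> x \in Vh :\: S.
  by move=> xD; rewrite inVhS ?(subsetP DVh) ?(disjointFr DS).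
have fg_const : {in D &, forall u v, f u (+) g u = f v (+) g v}.
  apply: (component_invariant sE Dc) => x y xD yD Exy.
  have := fP (subsetP (compsHX_sub Dc) x xD) (subsetP (compsHX_sub Dc) y yD) Exy.
  have := gP (DVhS x xD) (DVhS y yD) Exy.
  by case: (f x); case: (f y); case: (g x); case: (g y).
have gaua := gP (inVhS a (subsetP X_sub_Vh a aX) aS) (DVhS ua uaD) Eaua.
have gbub := gP (inVhS b (subsetP X_sub_Vh b bX) bS) (DVhS ub ubD) Ebub.
rewrite -(eqP fab); move: gaua gbub (fg_const ua ub uaD ubD).
by case: (f ua); case: (f ub); case: (g ua); case: (g ub); case: (g a); case: (g b).
Qed.

Lemma realizes_parity_unkept D a b : D \in compsHX -> D \notin kept_comps ->
  D \subset C -> realizes D a b -> a \notin S -> b \notin S -> (g a != g b) = odd_pair a b.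
Proof.
move=> Dc DnM DC rD aS bS.
case: (boolP ((g a != g b) == odd_pair a b)) => [/eqP // | bad]; exfalso.
have Dr : D \in realizers a b by rewrite inE Dc rD.
have DnK : D \notin kept a b by apply: contra DnM => /(subsetP (kept_sub_comps a b)).
have aC : a \in C.
  case/and3P: (rD) => aX _ /exists_inP[ua uaD /exists_inP[_ _ /andP[Eaua _]]].
  by apply: components_closed Cc (subsetP DC ua uaD) (subsetP XV a aX) _; rewrite sE.
have hit : {in kept a b, forall D' : {set T}, ~~ [disjoint D' & S :&: C]}.
  move=> D' D'K; have /setIdP[D'c rD'] := subsetP (kept_sub a b) D' D'K.
  have D'Vh := kept_sub_Vh (subsetP (kept_sub_comps a b) D' D'K).
  have D'C : D' \subset C.
    by rewrite (componentE sE Cc aC); apply: realizer_sub_component rD'.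
  rewrite -setI_eq0 setIC -setIA (setIidPr D'C) setIC setI_eq0.
  by apply: contra bad => D'S; rewrite (realizes_parity_disjoint D'c D'Vh D'S rD' aS bS).
have tiK : trivIset (kept a b).
  apply: trivIsetS (partition_trivIset (partition_components sE (V :\: X))).
  by apply: subset_trans (kept_sub a b) _; apply/subsetP => D'; rewrite inE => /andP[].
have := leq_card_hitting tiK hit; rewrite (card_kept_full Dr DnK) => zSC.
by have := leq_trans (leq_ltn_trans zSC SC_lt) (zb Cc); rewrite ltnn.
Qed.

Lemma unkept_parity_consistent D a b ua ub : D \in compsHX -> D \notin kept_comps ->
  D \subset C -> a \in X -> a \notin S -> b \in X -> b \notin S -> ua \in D -> ub \in D ->
  E a ua -> E b ub -> f ua (+) g a = f ub (+) g b.
Proof.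
move=> Dc DnM DC aX aS bX bS uaD ubD Eaua Ebub.
have realizesP x y ux uy : x \in X -> y \in X -> ux \in D -> uy \in D -> E x ux -> E y uy ->
    (f ux != f uy) == odd_pair x y -> realizes D x y.
  move=> xX yX uxD uyD Exux Eyuy hxy; rewrite /realizes xX yX /=.
  by apply/exists_inP; exists ux => //; apply/exists_inP; exists uy; rewrite ?Exux ?Eyuy.
have parity x y := @realizes_parity_unkept D x y Dc DnM DC.
case: (boolP ((f ua != f ub) == odd_pair a b)) => hab.
  have := parity _ _ (realizesP _ _ _ _ aX bX uaD ubD Eaua Ebub hab) aS bS.
  by move: hab; case: (odd_pair a b); case: (f ua); case: (f ub); case: (g a); case: (g b).
have [eab|nab] := eqVneq a b.
  by subst b; move: hab; rewrite odd_pair_refl; case: (f ua); case: (f ub).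
have hba : (f ub != f ua) == odd_pair b a.
  by rewrite (odd_pairC nab); move: hab; case: (odd_pair a b); case: (f ua); case: (f ub).
have := parity _ _ (realizesP _ _ _ _ bX aX ubD uaD Ebub Eaua hba) bS aS.
rewrite (odd_pairC nab); move: hab.
by case: (odd_pair a b); case: (f ua); case: (f ub); case: (g a); case: (g b).
Qed.

Definition flip_bit (D : {set T}) :=
  [exists x, exists u, [&& x \in X, x \notin S, u \in D, E x u & f u == g x]].

Lemma flip_bit_proper D x u : D \in compsHX -> D \notin kept_comps -> D \subset C ->
  x \in X -> x \notin S -> u \in D -> E x u -> f u (+) flip_bit D != g x.
Proof.
move=> Dc DnM DC xX xS uD Exu; case flipD: (flip_bit D).
  case/existsP: flipD => x0 /existsP[u0 /and5P[x0X x0S u0D Ex0u0 fg0]].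
  have := unkept_parity_consistent Dc DnM DC x0X x0S xX xS u0D uD Ex0u0 Exu.
  by move: fg0; case: (f u0); case: (g x0); case: (f u); case: (g x).
rewrite addbF; apply: contraFN flipD => fg.
by apply/existsP; exists x; apply/existsP; exists u; rewrite xX xS uD Exu fg.
Qed.

Definition recolour := [ffun w => if w \in C then
  (if w \in Vh then g w else f w (+) flip_bit (component (V :\: X) E w)) else f w].

Lemma recolour_boundary w w' : w \in C -> w' \in C -> w \notin S -> w \in Vh ->
  w' \notin Vh -> E w w' -> recolour w != recolour w'.
Proof.
move=> wC w'C wS wVh w'nVh Eww'; have /and3P[_ _ w'V] := EV Eww'.
have w'VX := notin_Vh_VX w'V w'nVh.
have D'c := component_in_components E w'VX; have w'D' := mem_component E w'VX.
have D'nM : component (V :\: X) E w' \notin kept_comps.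
  by apply: contra w'nVh => /kept_sub_Vh/subsetP; apply.
have D'C := sub_component sE (subsetDl V X) D'c Cc w'D' w'C.
rewrite !ffunE wC w'C wVh (negbTE w'nVh).
have [wX|wnX] := boolP (w \in X); first by rewrite eq_sym; apply: flip_bit_proper.
have /bigcupP[D DM wD] : w \in cover kept_comps by rewrite -VhDX inE wnX.
have Dc := subsetP kept_comps_sub D DM.
have w'D : w' \in D := components_closed Dc wD w'VX Eww'.
by case/negP: D'nM; rewrite -(componentE sE Dc w'D).
Qed.

Definition X_swap := (X :\: C) :|: (S :&: C).

Lemma X_swap_sub : X_swap \subset V.
Proof.
rewrite subUset (subset_trans (subsetDl X C) XV) /=.
exact: subset_trans (subsetIl S C) (subset_trans SVh Vh_sub).
Qed.

Lemma card_X_swap : #|X_swap| < #|X|.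
Proof.
apply: leq_ltn_trans (leq_card_setU _ _).1 _.
by rewrite -(cardsID C X) addnC ltn_add2r.
Qed.

Lemma recolour_proper x y : x \in V :\: X_swap -> y \in V :\: X_swap -> E x y ->
  recolour x != recolour y.
Proof.
have outside v : v \in V :\: X_swap -> (v \in C -> v \notin S) /\ (v \notin C -> v \notin X).
  rewrite !inE negb_or !negb_and => /andP[/andP[hX hS] _].
  by split => vC; [move: hS | move: hX]; rewrite ?vC ?orbF.
move=> xO yO Exy; have [xS xX] := outside x xO; have [yS yX] := outside y yO.
have /and3P[_ xV yV] := EV Exy.
have notX v : v \in V -> v \notin X -> v \in V :\: X by move=> vV vX; rewrite inE vX vV.
have [xC|xnC] := boolP (x \in C); last first.
  have ynC : y \notin C.
    by apply: contra xnC => yC; apply: components_closed Cc yC xV _; rewrite sE.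
  by rewrite !ffunE (negbTE xnC) (negbTE ynC) fP ?notX ?xX ?yX.
have yC := components_closed Cc xC yV Exy.
have {}xS := xS xC; have {}yS := yS yC.
have inVhS v : v \in Vh -> v \notin S -> v \in Vh :\: S by move=> *; apply/setDP.
have [xVh|xnVh] := boolP (x \in Vh); have [yVh|ynVh] := boolP (y \in Vh).
- by rewrite !ffunE xC yC xVh yVh gP ?inVhS.
- exact: recolour_boundary.
- by rewrite eq_sym; apply: recolour_boundary; rewrite // sE.
have xVX := notin_Vh_VX xV xnVh; have yVX := notin_Vh_VX yV ynVh.
rewrite !ffunE xC yC (negbTE xnVh) (negbTE ynVh).
have -> : component (V :\: X) E y = component (V :\: X) E x.
  apply/esym/(componentE sE (component_in_components E xVX)).
  exact: components_closed (component_in_components E xVX) (mem_component E xVX) yVX Exy.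
by have := fP xVX yVX Exy; case: (f x); case: (f y); case: (flip_bit _).
Qed.

Lemma bipartite_X_swap : bipartite (del_V V X_swap) (del_E V E X_swap).
Proof. by apply/bipartite_delP; exists recolour; apply: recolour_proper. Qed.

End SmallTransversal.

Hypothesis octX : oct V E = #|X|.

Lemma oct_hat_ge : #|X| <= oct Vh Eh.
Proof.
apply: leq_oct (max_card _) _ => S SVh /bipartite_delP[g gPh].
have gP x y : x \in Vh :\: S -> y \in Vh :\: S -> E x y -> g x != g y.
  move=> xS yS Exy; apply: gPh => //.
  by rewrite /Eh /restr /= Exy (subsetP (subsetDl Vh S) x xS) (subsetP (subsetDl Vh S) y yS).
rewrite leqNgt; apply/negP => SX.
have /exists_inP[C Cc SC_lt] : [exists C in components V E, #|S :&: C| < #|X :&: C|].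
  apply: contraLR SX => /exists_inPn XS; rewrite -leqNgt -(setIidPl XV).
  apply: leq_trans (subset_leq_card (subsetIl S V)); rewrite !(card_setI_components sE).
  by apply: leq_sum => C Cc; rewrite leqNgt XS.
have := oct_le_card (bipartite_X_swap gP Cc SC_lt).
by rewrite octX (setIidPl (X_swap_sub C SVh)) leqNgt card_X_swap.
Qed.

Lemma certificate_hat : certificate e X z Vh Eh.
Proof.
split.
- split; first exact: subsetT; split; first exact: restr_sym.
  by move=> x y /and3P[Exy -> ->]; have /and3P[-> _ _] := EV Exy.
- exact: bipartite_hat_del.
- by apply/eqP; rewrite eqn_leq oct_hat_le oct_hat_ge.
- exact: components_hat_bound.
Qed.

End Reduction.

Theorem mainTheorem6 (T : finType) (e : rel T) (XC : {set T}) (z : nat)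
    (V : {set T}) (E : rel T) :
  simple_graph e ->
  certificate e XC z V E ->
  exists (Vh : {set T}) (Eh : rel T),
    [/\ subgraph_of V E Vh Eh,
        certificate e XC z Vh Eh &
        #|components (del_V Vh XC) (del_E Vh Eh XC)| <= z ^ 2 * #|XC|].
Proof.
move=> _ [[_ [sE EV]] bipX octX zb].
have XV := oct_card_sub bipX octX.
have /bipartite_delP[f fP] := bipX.
exists (Vh XC z V E f), (Eh XC z V E f); split.
- exact: subgraph_hat.
- exact: certificate_hat.
- by rewrite components_hat_del //; apply: card_kept_comps.
Qed.
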